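(* Let $H$ be any random variable with values in $(0,1)$ with $\mu_{\log}:=E[-\log(1-H)]<\infty$ (no non-lattice assumption). Let $Q_\bullet$ be the Markov chain on $\{1,2,\dots\}$ with transition probabilities $p_{m,n}=\binom{n-1}{m-1}\mu_{n-m,m}$ for $1\le m\le n$ (and $0$ for $n<m$) and initial distribution $P(Q_0=n)=\mu_{n,0}/(n\,\mu_{\log})$, $n\ge1$. Then for every $n\ge1$, $$P(Q_k=n\text{ for some }k\ge0)=\frac{1-\mu_{0,n}}{n\,\mu_{\log}}.$$
   Context: $\mu_{i,j}:=E[H^i(1-H)^j]$. *)

From Stdlib Require Import Reals Lra Lia Arith.
Open Scope R_scope.

(* A Borel probability
   law on (0,1) is represented (Daniell–Stone) by its expectation
   functional on bounded functions continuous on (0,1): positive, linear,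
   normalised and sigma-smooth (monotone convergence on decreasing
   sequences). By Daniell–Stone these are exactly the Borel probability
   measures on (0,1). *)

Definition bc01 (f : R -> R) : Prop :=
  (exists B, forall x, 0 < x < 1 -> Rabs (f x) <= B) /\
  (forall x, 0 < x < 1 -> continuity_pt f x).

Record law01 := {
  Ex : (R -> R) -> R;
  Ex_ext : forall f g, (forall x, 0 < x < 1 -> f x = g x) -> Ex f = Ex g;
  Ex_lin : forall f g a b, bc01 f -> bc01 g ->
     Ex (fun x => a * f x + b * g x) = a * Ex f + b * Ex g;
  Ex_pos : forall f, bc01 f -> (forall x, 0 < x < 1 -> 0 <= f x) -> 0 <= Ex f;
  Ex_one : Ex (fun _ => 1) = 1;
  Ex_smooth : forall fs : nat -> R -> R,
     (forall k, bc01 (fs k)) ->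
     (forall k x, 0 < x < 1 -> 0 <= fs (S k) x <= fs k x) ->
     (forall x, 0 < x < 1 -> Un_cv (fun k => fs k x) 0) ->
     Un_cv (fun k => Ex (fs k)) 0
}.

Definition mu (L : law01) (i j : nat) : R := Ex L (fun x => x ^ i * (1 - x) ^ j).

(* truncated E[min(-log(1-H), M)]; E[-log(1-H)] is its (monotone) limit *)
Definition mulog_trunc (L : law01) (M : nat) : R :=
  Ex L (fun x => Rmin (- ln (1 - x)) (INR M)).

Definition trans (L : law01) (m n : nat) : R :=
  if andb (1 <=? m)%nat (m <=? n)%nat
  then C (n - 1) (m - 1) * mu L (n - m) m else 0.

Definition init (L : law01) (mulog : R) (n : nat) : R :=
  if (1 <=? n)%nat then mu L n 0 / (INR n * mulog) else 0.

Fixpoint sumR (N : nat) (g : nat -> R) : R :=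
  match N with O => 0 | S N' => sumR N' g + g (S N') end.

(* Generic chain (initial law pi, transition p) on states 1,2,...
   avoid pi p n N k y = P(Q_0,...,Q_k all in {1..N}\{n}, Q_k = y). *)
Fixpoint avoid (pi : nat -> R) (p : nat -> nat -> R) (n N k y : nat) : R :=
  if andb (andb (1 <=? y)%nat (y <=? N)%nat) (negb (y =? n)%nat) then
    match k with
    | O => pi y
    | S k' => sumR N (fun x => avoid pi p n N k' x * p x y)
    end
  else 0.

(* P(Q_0..Q_{k-1} in {1..N}\{n}, Q_k = n); as N -> oo this increases to
   P(first visit of n at time k). *)
Definition first_hit (pi : nat -> R) (p : nat -> nat -> R) (n N k : nat) : R :=
  match k with
  | O => pi n
  | S k' => sumR N (fun x => avoid pi p n N k' x * p x n)
  end.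

(* The chain never moves down ([p_{m,k} = 0] for [k < m]), so before its first
   visit to [n] it lives on [{1, ..., n-1}], and
     P(hit n) = pi(n) + sum_{x<n} g(x) p_{x,n},
   where [g(y)] is the expected number of visits to [y < n].  Decomposing according to the
   previous state, [g] solves the triangular balance equations
     g(y) (1 - p_{y,y}) = pi(y) + sum_{x<y} g(x) p_{x,y},
   which determine it because [p_{y,y} = mu_{0,y} < 1].  The binomial identity
   [sum_i C(y,i) mu_{y-i,i} = E[(H + (1-H))^y] = 1], together with
   [C(y,i) = (y/i) C(y-1,i-1)], says that [g(y) = 1 / (y mu_log)] solves them, and then the
   same identity at [y = n] turns the first display into [(1 - mu_{0,n}) / (n mu_log)]. *)

From Stdlib Require Import Reals Lra Lia Arith Bool.
Open Scope R_scope.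

Lemma Un_cv_eventually_const (u : nat -> R) l N :
  (forall m, (N <= m)%nat -> u m = l) -> Un_cv u l.
Proof.
  intros Hu e He. exists N. intros m Hm.
  rewrite Hu by lia. unfold Rdist. rewrite Rminus_diag, Rabs_R0. lra.
Qed.

Lemma Un_cv_const c : Un_cv (fun _ => c) c.
Proof. apply (Un_cv_eventually_const _ _ 0). reflexivity. Qed.

Lemma infinite_sum_scal (u v : nat -> R) c l :
  (forall k, u k = c * v k) -> infinite_sum v l -> infinite_sum u (c * l).
Proof.
  intros Huv Hv.
  apply (Un_cv_ext (fun K => c * sum_f_R0 v K)).
  - intros K. rewrite scal_sum. apply sum_eq. intros k _. rewrite Huv. ring.
  - apply CV_mult; [apply Un_cv_const | exact Hv].
Qed.

Lemma sumR_ext N g h :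
  (forall x, (1 <= x <= N)%nat -> g x = h x) -> sumR N g = sumR N h.
Proof.
  induction N as [|N IH]; intros H; simpl; [reflexivity|].
  rewrite IH, H by (lia || (intros; apply H; lia)). reflexivity.
Qed.

Lemma sumR_trunc M N g :
  (M <= N)%nat -> (forall x, (M < x)%nat -> g x = 0) -> sumR N g = sumR M g.
Proof.
  induction N as [|N IH]; intros HM Hg.
  - replace M with 0%nat by lia. reflexivity.
  - destruct (Nat.eq_dec M (S N)) as [->|HMN]; [reflexivity|].
    simpl. rewrite IH, (Hg (S N)) by (exact Hg || lia). ring.
Qed.

Lemma sumR_plus N g h : sumR N (fun x => g x + h x) = sumR N g + sumR N h.
Proof. induction N as [|N IH]; simpl; [|rewrite IH]; ring. Qed.

Lemma sumR_mult_l N c g : sumR N (fun x => c * g x) = c * sumR N g.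
Proof. induction N as [|N IH]; simpl; [|rewrite IH]; ring. Qed.

Lemma sumR_le N g h :
  (forall x, (1 <= x <= N)%nat -> g x <= h x) -> sumR N g <= sumR N h.
Proof.
  induction N as [|N IH]; intros H; simpl; [lra|].
  apply Rplus_le_compat; [apply IH; intros|]; apply H; lia.
Qed.

Lemma sumR_ge0 N g : (forall x, 0 <= g x) -> 0 <= sumR N g.
Proof.
  intros H. induction N as [|N IH]; simpl; [lra|].
  specialize (H (S N)). lra.
Qed.

Lemma sum_f_R0_sumR M K (g : nat -> nat -> R) :
  sum_f_R0 (fun k => sumR M (g k)) K = sumR M (fun x => sum_f_R0 (fun k => g k x) K).
Proof.
  induction K as [|K IH]; simpl; [reflexivity|].
  rewrite IH, <- sumR_plus. reflexivity.
Qed.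

Lemma sum_f_R0_sumR_split N f : sum_f_R0 f N = f 0%nat + sumR N f.
Proof. induction N as [|N IH]; simpl; [|rewrite IH]; ring. Qed.

Lemma CV_sumR M (u : nat -> nat -> R) l :
  (forall x, (1 <= x <= M)%nat -> Un_cv (fun K => u K x) (l x)) ->
  Un_cv (fun K => sumR M (u K)) (sumR M l).
Proof.
  induction M as [|M IH]; intros H; simpl.
  - apply Un_cv_const.
  - apply CV_plus; [apply IH; intros|]; apply H; lia.
Qed.

Lemma avoid_scal q q' p n N c k y :
  (forall y, q' y = c * q y) -> avoid q' p n N k y = c * avoid q p n N k y.
Proof.
  intros Hq. revert y. induction k as [|k IH]; intros y; simpl;
    destruct (_ && _)%bool; try ring; [apply Hq|].
  rewrite <- sumR_mult_l. apply sumR_ext. intros x _. rewrite IH. ring.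
Qed.

Lemma first_hit_scal q q' p n N c k :
  (forall y, q' y = c * q y) -> first_hit q' p n N k = c * first_hit q p n N k.
Proof.
  intros Hq. destruct k as [|k]; simpl; [apply Hq|].
  rewrite <- sumR_mult_l. apply sumR_ext. intros x _.
  rewrite (avoid_scal q q' p n N c) by exact Hq. ring.
Qed.

Section UpwardChain.
Variables (q : nat -> R) (p : nat -> nat -> R) (n : nat).
Hypothesis q_ge0 : forall y, 0 <= q y.
Hypothesis p_ge0 : forall x y, 0 <= p x y.
Hypothesis p_upward : forall x y, (y < x)%nat -> p x y = 0.

Lemma avoid_ge0 N k y : 0 <= avoid q p n N k y.
Proof.
  revert y. induction k as [|k IH]; intros y; simpl; destruct (_ && _)%bool; try lra.
  - apply q_ge0.
  - apply sumR_ge0. intros x. apply Rmult_le_pos; auto.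
Qed.

Lemma avoid_inside N k y : (1 <= y <= N)%nat -> y <> n ->
  avoid q p n N k y =
  match k with O => q y | S k' => sumR N (fun x => avoid q p n N k' x * p x y) end.
Proof.
  intros Hy Hyn.
  assert (Hin : ((1 <=? y)%nat && (y <=? N)%nat && negb (y =? n)%nat)%bool = true).
  { rewrite (proj2 (Nat.leb_le 1 y)), (proj2 (Nat.leb_le y N)), (proj2 (Nat.eqb_neq y n))
      by (assumption || lia).
    reflexivity. }
  destruct k; cbn [avoid]; rewrite Hin; reflexivity.
Qed.

Lemma avoid_outside N k y : (y = 0 \/ N < y \/ y = n)%nat -> avoid q p n N k y = 0.
Proof.
  intros Hy.
  assert (Hout : ((1 <=? y)%nat && (y <=? N)%nat && negb (y =? n)%nat)%bool = false).
  { destruct Hy as [->|[Hy| ->]].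
    - reflexivity.
    - rewrite (proj2 (Nat.leb_gt y N)) by lia. rewrite andb_false_r. reflexivity.
    - rewrite Nat.eqb_refl. apply andb_false_r. }
  destruct k; cbn [avoid]; rewrite Hout; reflexivity.
Qed.

(* Since the chain only moves upward, a path avoiding [n] and ending at [y <= n] stays in [{1..y}]. *)
Lemma avoid_trunc N k y : (n <= N)%nat -> (y <= n)%nat ->
  avoid q p n N k y = avoid q p n n k y.
Proof.
  intros HN. revert y. induction k as [|k IH]; intros y Hy;
    (destruct (Nat.eq_dec y 0) as [Hy0|Hy0]; [rewrite !avoid_outside by lia; reflexivity|]);
    (destruct (Nat.eq_dec y n) as [Hyn|Hyn]; [rewrite !avoid_outside by lia; reflexivity|]);
    rewrite !avoid_inside by lia; [reflexivity|].
  rewrite (sumR_trunc y N), (sumR_trunc y n)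
    by (lia || (intros x Hx; rewrite p_upward by lia; ring)).
  apply sumR_ext. intros x Hx. rewrite IH by lia. reflexivity.
Qed.

Lemma first_hit_trunc N k : (n <= N)%nat -> first_hit q p n N k = first_hit q p n n k.
Proof.
  intros HN. destruct k as [|k]; [reflexivity|]. simpl.
  rewrite (sumR_trunc n N) by (lia || (intros x Hx; rewrite p_upward by lia; ring)).
  apply sumR_ext. intros x Hx. rewrite avoid_trunc by lia. reflexivity.
Qed.

Lemma first_hit_cv k : Un_cv (fun N => first_hit q p n N k) (first_hit q p n n k).
Proof. apply (Un_cv_eventually_const _ _ n). intros N HN. apply first_hit_trunc, HN. Qed.

(* Expected number of visits to [y] at times [<= K] before the first visit to [n]. *)
Definition occupation K y := sum_f_R0 (fun k => avoid q p n n k y) K.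

Lemma occupation_growing y : Un_growing (fun K => occupation K y).
Proof. intros K. unfold occupation. rewrite tech5. pose proof (avoid_ge0 n (S K) y). lra. Qed.

Lemma avoid_succ k y' : (S y' < n)%nat ->
  avoid q p n n (S k) (S y') =
  sumR y' (fun x => avoid q p n n k x * p x (S y')) + avoid q p n n k (S y') * p (S y') (S y').
Proof.
  intros Hy. rewrite avoid_inside by lia.
  apply (sumR_trunc (S y')); [lia|]. intros x Hx. rewrite p_upward by lia. ring.
Qed.

Lemma occupation_succ K y' : (S y' < n)%nat ->
  occupation (S K) (S y') =
  q (S y') + sumR y' (fun x => occupation K x * p x (S y'))
  + occupation K (S y') * p (S y') (S y').
Proof.
  intros Hy. unfold occupation.
  rewrite decomp_sum by lia. simpl pred.
  rewrite avoid_inside by lia. rewrite Rplus_assoc. f_equal.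
  rewrite (sum_eq _ _ K (fun k _ => avoid_succ k y' Hy)), sum_plus, sum_f_R0_sumR.
  rewrite <- scal_sum, Rmult_comm. f_equal.
  apply sumR_ext. intros x _. rewrite Rmult_comm, scal_sum. reflexivity.
Qed.

Variable g : nat -> R.
Hypothesis p_diag_lt1 : forall y, (1 <= y < n)%nat -> p y y < 1.
Hypothesis g_balance : forall y', (S y' <= n)%nat ->
  g (S y') * (1 - p (S y') (S y')) = q (S y') + sumR y' (fun x => g x * p x (S y')).

(* The occupation of [S y'] increases, is bounded by [g (S y')], and its limit solves the balance
   equation at [S y'], whose solution is unique since [p (S y') (S y') < 1]. *)
Lemma occupation_cv_succ y' : (S y' < n)%nat ->
  (forall x, (1 <= x <= y')%nat -> Un_cv (fun K => occupation K x) (g x)) ->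
  Un_cv (fun K => occupation K (S y')) (g (S y')).
Proof.
  intros Hy IH.
  set (pp := p (S y') (S y')).
  assert (Hpp : pp < 1) by (apply p_diag_lt1; lia).
  assert (Hg := g_balance y' ltac:(lia)). fold pp in Hg.
  assert (Hbelow : forall K, sumR y' (fun x => occupation K x * p x (S y'))
                             <= sumR y' (fun x => g x * p x (S y'))).
  { intros K. apply sumR_le. intros x Hx. apply Rmult_le_compat_r; [apply p_ge0|].
    apply (growing_ineq (fun K => occupation K x)); [apply occupation_growing | auto]. }
  assert (Hub : has_ub (fun K => occupation K (S y'))).
  { exists (g (S y')). intros z [K ->].
    pose proof (occupation_succ K y' Hy) as Hs. pose proof (occupation_growing (S y') K).
    pose proof (Hbelow K). fold pp in Hs.
    apply (Rmult_le_reg_r (1 - pp)); lra. }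
  destruct (growing_cv _ (occupation_growing (S y')) Hub) as [l Hl].
  assert (Hfix : l = q (S y') + sumR y' (fun x => g x * p x (S y')) + l * pp).
  { apply (UL_sequence (fun K => occupation (K + 1) (S y'))); [now apply CV_shift'|].
    apply (Un_cv_ext (fun K => q (S y') + sumR y' (fun x => occupation K x * p x (S y'))
                               + occupation K (S y') * pp)).
    - intros K. rewrite Nat.add_1_r, occupation_succ by exact Hy. reflexivity.
    - apply CV_plus; [apply CV_plus|]; [apply Un_cv_const | |].
      + apply CV_sumR. intros x Hx.
        apply CV_mult; [auto | apply Un_cv_const].
      + apply CV_mult; [exact Hl | apply Un_cv_const]. }
  replace (g (S y')) with l; [exact Hl|].
  apply (Rmult_eq_reg_r (1 - pp)); lra.
Qed.

Lemma occupation_cv y : (1 <= y < n)%nat -> Un_cv (fun K => occupation K y) (g y).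
Proof.
  induction y as [y IH] using lt_wf_ind. intros Hy.
  destruct y as [|y']; [lia|].
  apply occupation_cv_succ; [lia|]. intros x Hx. apply IH; lia.
Qed.

Lemma sum_first_hit K n' : n = S n' ->
  sum_f_R0 (first_hit q p n n) (S K) = q n + sumR n' (fun x => occupation K x * p x n).
Proof.
  intros Hn. rewrite decomp_sum by lia. simpl pred. f_equal.
  rewrite (sum_eq _ (fun k => sumR n' (fun x => avoid q p n n k x * p x n))).
  - rewrite sum_f_R0_sumR. apply sumR_ext. intros x _.
    unfold occupation. rewrite Rmult_comm, scal_sum. reflexivity.
  - intros k _. simpl.
    apply sumR_trunc; [lia|]. intros x Hx. rewrite avoid_outside by lia. ring.
Qed.

Lemma first_hit_series : (1 <= n)%nat ->
  infinite_sum (first_hit q p n n) (g n * (1 - p n n)).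
Proof.
  intros Hn1. set (n' := pred n). assert (Hn : n = S n') by (unfold n'; lia).
  replace (g n * (1 - p n n)) with (q n + sumR n' (fun x => g x * p x n))
    by (rewrite Hn; symmetry; apply g_balance; lia).
  apply (CV_shift _ 1). apply (Un_cv_ext (fun K => q n + sumR n' (fun x => occupation K x * p x n))).
  - intros K. rewrite Nat.add_1_r. symmetry. apply sum_first_hit, Hn.
  - apply CV_plus; [apply Un_cv_const|].
    apply CV_sumR. intros x Hx.
    apply CV_mult; [apply occupation_cv; lia | apply Un_cv_const].
Qed.

End UpwardChain.

Lemma bc01_const c : bc01 (fun _ => c).
Proof.
  split; [exists (Rabs c); intros; lra|].
  intros x _. apply continuity_pt_const. intros u v. reflexivity.
Qed.

Lemma bc01_plus f g : bc01 f -> bc01 g -> bc01 (fun x => f x + g x).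
Proof.
  intros [[Bf Hf] Cf] [[Bg Hg] Cg]. split.
  - exists (Bf + Bg). intros x Hx.
    eapply Rle_trans; [apply Rabs_triang | apply Rplus_le_compat; auto].
  - intros x Hx. exact (continuity_pt_plus _ _ _ (Cf x Hx) (Cg x Hx)).
Qed.

Lemma bc01_scal a f : bc01 f -> bc01 (fun x => a * f x).
Proof.
  intros [[B HB] Cf]. split.
  - exists (Rabs a * B). intros x Hx. rewrite Rabs_mult.
    apply Rmult_le_compat_l; [apply Rabs_pos | auto].
  - intros x Hx. exact (continuity_pt_scal _ a _ (Cf x Hx)).
Qed.

Lemma pow_unit_interval x k : 0 <= x <= 1 -> 0 <= x ^ k <= 1.
Proof.
  intros Hx. split; [apply pow_le; lra|].
  rewrite <- (pow1 k). apply pow_incr. lra.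
Qed.

Lemma bc01_poly i j : bc01 (fun x => x ^ i * (1 - x) ^ j).
Proof.
  split; [|intros x _; reg].
  exists 1. intros x Hx.
  pose proof (pow_unit_interval x i ltac:(lra)).
  pose proof (pow_unit_interval (1 - x) j ltac:(lra)).
  rewrite Rabs_right by (apply Rle_ge, Rmult_le_pos; lra). nra.
Qed.

Lemma bc01_sum (g : nat -> R -> R) M :
  (forall i, bc01 (g i)) -> bc01 (fun x => sum_f_R0 (fun i => g i x) M).
Proof.
  intros Hg. induction M as [|M IH]; [exact (Hg 0%nat)|].
  exact (bc01_plus _ _ IH (Hg (S M))).
Qed.

Section Law.
Variable L : law01.

Lemma Ex_scal a f : bc01 f -> Ex L (fun x => a * f x) = a * Ex L f.
Proof.
  intros Hf. rewrite (Ex_ext L _ (fun x => a * f x + 0 * f x)) by (intros; ring).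
  rewrite Ex_lin by exact Hf. ring.
Qed.

Lemma Ex_sum (g : nat -> R -> R) M : (forall i, bc01 (g i)) ->
  Ex L (fun x => sum_f_R0 (fun i => g i x) M) = sum_f_R0 (fun i => Ex L (g i)) M.
Proof.
  intros Hg. induction M as [|M IH]; [reflexivity|]. simpl.
  rewrite (Ex_ext L _ (fun x => 1 * sum_f_R0 (fun i => g i x) M + 1 * g (S M) x))
    by (intros; ring).
  rewrite Ex_lin, IH by (apply bc01_sum || idtac; auto). ring.
Qed.

Lemma Ex_mono f g : bc01 f -> bc01 g -> (forall x, 0 < x < 1 -> f x <= g x) ->
  Ex L f <= Ex L g.
Proof.
  intros Hf Hg Hfg.
  assert (H : 0 <= Ex L (fun x => 1 * g x + (-1) * f x)).
  { apply Ex_pos; [apply bc01_plus; apply bc01_scal; auto|].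
    intros x Hx. specialize (Hfg x Hx). lra. }
  rewrite Ex_lin in H by auto. lra.
Qed.

Lemma mu_ge0 i j : 0 <= mu L i j.
Proof.
  apply Ex_pos; [apply bc01_poly|]. intros x Hx.
  apply Rmult_le_pos; apply pow_le; lra.
Qed.

Lemma mu_binomial y : sum_f_R0 (fun i => C y i * mu L (y - i) i) y = 1.
Proof.
  rewrite <- (Ex_one L).
  rewrite (Ex_ext L _ (fun x => sum_f_R0 (fun i => C y i * (x ^ (y - i) * (1 - x) ^ i)) y)).
  - rewrite Ex_sum by (intros; apply bc01_scal, bc01_poly).
    apply sum_eq. intros i _. rewrite Ex_scal by apply bc01_poly. reflexivity.
  - intros x _. transitivity ((1 - x + x) ^ y).
    + replace (1 - x + x) with 1 by ring. symmetry; apply pow1.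
    + rewrite binomial. apply sum_eq. intros i _. ring.
Qed.

Lemma mu_0_cv0 : Un_cv (fun m => mu L 0 m) 0.
Proof.
  apply Ex_smooth; [intros; apply bc01_poly | |].
  - intros m x Hx. simpl. pose proof (pow_le (1 - x) m ltac:(lra)). nra.
  - intros x Hx e He. destruct (pow_lt_1_zero (1 - x) ltac:(apply Rabs_def1; lra) e He) as [N HN].
    exists N. intros m Hm. unfold Rdist. simpl. rewrite Rminus_0_r, Rmult_1_l. auto.
Qed.

Lemma one_minus_pow_le t k : 0 <= t <= 1 -> 1 - t ^ k <= INR k * (1 - t).
Proof.
  intros Ht. induction k as [|k IH]; [simpl; lra|].
  rewrite S_INR. change (t ^ S k) with (t * t ^ k).
  pose proof (pow_unit_interval t k Ht). nra.
Qed.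

(* [1 - E[(1-H)^(y k)] <= k (1 - E[(1-H)^y])], while [E[(1-H)^(y k)] -> 0] as [k -> oo]. *)
Lemma mu_0_lt1 y : (1 <= y)%nat -> mu L 0 y < 1.
Proof.
  intros Hy.
  assert (Hbern : forall k, 1 - mu L 0 (y * k) <= INR k * (1 - mu L 0 y)).
  { intros k.
    assert (H : Ex L (fun x => (1 - INR k) * 1 + INR k * (x ^ 0 * (1 - x) ^ y))
                <= mu L 0 (y * k)).
    { apply Ex_mono; [apply bc01_plus; apply bc01_scal; auto using bc01_const, bc01_poly
                     | apply bc01_poly |].
      intros x Hx. rewrite pow_mult. simpl. rewrite !Rmult_1_l.
      pose proof (pow_unit_interval (1 - x) y ltac:(lra)) as Ht.
      pose proof (one_minus_pow_le ((1 - x) ^ y) k Ht). lra. }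
    rewrite Ex_lin, Ex_one in H by auto using bc01_const, bc01_poly.
    unfold mu at 2. lra. }
  destruct (mu_0_cv0 (1 / 2) ltac:(lra)) as [N HN].
  specialize (HN (y * N)%nat ltac:(nia)). specialize (Hbern N).
  unfold Rdist in HN. rewrite Rminus_0_r in HN. apply Rabs_def2 in HN.
  pose proof (pos_INR N). nra.
Qed.

End Law.

Lemma C_0_r a : C a 0 = 1.
Proof. unfold C. rewrite Nat.sub_0_r. simpl. field. apply INR_fact_neq_0. Qed.

Lemma C_diag a : C a a = 1.
Proof. unfold C. rewrite Nat.sub_diag. simpl. field. apply INR_fact_neq_0. Qed.

Lemma C_absorb a b : (b <= a)%nat -> C (S a) (S b) = INR (S a) / INR (S b) * C a b.
Proof.
  intros Hb. unfold C. simpl (S a - S b)%nat. rewrite !fact_simpl, !mult_INR.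
  pose proof (INR_fact_neq_0 a). pose proof (INR_fact_neq_0 b).
  pose proof (INR_fact_neq_0 (a - b)). assert (INR (S b) <> 0) by (apply not_0_INR; lia).
  field. auto.
Qed.

Lemma trans_eq L m k : (1 <= m <= k)%nat -> trans L m k = C (k - 1) (m - 1) * mu L (k - m) m.
Proof.
  intros H. unfold trans.
  rewrite (proj2 (Nat.leb_le 1 m)), (proj2 (Nat.leb_le m k)) by lia. reflexivity.
Qed.

Lemma trans_diag L y : (1 <= y)%nat -> trans L y y = mu L 0 y.
Proof. intros Hy. rewrite trans_eq, Nat.sub_diag, C_diag by lia. ring. Qed.

Lemma trans_ge0 L x y : 0 <= trans L x y.
Proof.
  unfold trans. destruct (_ && _)%bool; [|lra].
  apply Rmult_le_pos; [|apply mu_ge0].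
  unfold C. apply Rmult_le_pos; [apply pos_INR|].
  apply Rlt_le, Rinv_0_lt_compat, Rmult_lt_0_compat; apply INR_fact_lt_0.
Qed.

Lemma trans_upward L x y : (y < x)%nat -> trans L x y = 0.
Proof.
  intros H. unfold trans. rewrite (proj2 (Nat.leb_gt x y)) by lia.
  rewrite andb_false_r. reflexivity.
Qed.

Lemma init_ge0 L y : 0 <= init L 1 y.
Proof.
  unfold init. destruct (1 <=? y)%nat eqn:Hy; [|lra].
  apply Nat.leb_le in Hy. rewrite Rmult_1_r.
  apply Rmult_le_pos; [apply mu_ge0 | apply Rlt_le, Rinv_0_lt_compat, lt_0_INR; lia].
Qed.

Lemma init_scale L mulog y : init L mulog y = / mulog * init L 1 y.
Proof.
  unfold init. destruct (1 <=? y)%nat; [|ring].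
  unfold Rdiv. rewrite !Rinv_mult, Rinv_1. ring.
Qed.

(* The balance equation of [first_hit_series] for [g y = 1 / y] and initial law [init L 1]:
   the binomial identity [mu_binomial] divided by [y]. *)
Lemma harmonic_balance L y' :
  / INR (S y') * (1 - trans L (S y') (S y')) =
  init L 1 (S y') + sumR y' (fun x => / INR x * trans L x (S y')).
Proof.
  pose proof (mu_binomial L (S y')) as Hsum.
  rewrite sum_f_R0_sumR_split in Hsum. cbn [sumR] in Hsum.
  rewrite C_0_r, C_diag, Nat.sub_0_r, Nat.sub_diag in Hsum.
  assert (Hy : INR (S y') <> 0) by (apply not_0_INR; lia).
  rewrite (sumR_ext y' _ (fun x => / INR (S y') * (C (S y') x * mu L (S y' - x) x))).
  - rewrite sumR_mult_l, trans_diag by lia. unfold init. cbn [Nat.leb].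
    field_simplify_eq; [lra | exact Hy].
  - intros x Hx. destruct x as [|x']; [lia|].
    rewrite trans_eq, C_absorb by lia. simpl (S y' - 1)%nat. simpl (S x' - 1)%nat.
    rewrite !Nat.sub_0_r. assert (INR (S x') <> 0) by (apply not_0_INR; lia).
    field. auto.
Qed.

Theorem mainTheorem12 :
  forall (L : law01) (mulog : R),
    Un_cv (mulog_trunc L) mulog ->
    forall n : nat, (1 <= n)%nat ->
      exists f : nat -> R,
        (forall k, Un_cv (fun N => first_hit (init L mulog) (trans L) n N k) (f k)) /\
        infinite_sum f ((1 - mu L 0 n) / (INR n * mulog)).
Proof.
  intros L mulog _ n Hn.
  exists (first_hit (init L mulog) (trans L) n n). split.
  - intros k. apply first_hit_cv, trans_upward.
  - replace ((1 - mu L 0 n) / (INR n * mulog))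
      with (/ mulog * (/ INR n * (1 - trans L n n)))
      by (rewrite trans_diag by exact Hn; unfold Rdiv; rewrite Rinv_mult; ring).
    apply (infinite_sum_scal _ (first_hit (init L 1) (trans L) n n)).
    + intros k. apply first_hit_scal, init_scale.
    + apply (first_hit_series _ _ _ (init_ge0 L) (trans_ge0 L) (trans_upward L)
               (fun y => / INR y)); [| intros y' _; apply harmonic_balance | exact Hn].
      intros y Hy. rewrite trans_diag by lia. apply mu_0_lt1. lia.
Qed.
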